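(* Let $(v,b)$ satisfy (C1), with associated pair $(\lambda,\varepsilon)$ (so $\varepsilon\in\{\pm1,\pm2\}$). Then every TS$(v;b)$ $(V,\mathcal F)$ satisfies $$\sum_{\{x,y\}\in\binom V2}\lambda_{x,y}^2\ \ge\ \binom v2\lambda^2+2\varepsilon\lambda+2+|\varepsilon|,$$ and equality holds for any TS$(v;b)$ satisfying one of: (i) all $\lambda_{x,y}\in\{\lambda-1,\lambda,\lambda+1\}$, and with $D_1=\{\{x,y\}:\lambda_{x,y}=\lambda+1\}$, $D_{-1}=\{\{x,y\}:\lambda_{x,y}=\lambda-1\}$ we have $(|D_1|,|D_{-1}|)=(1+\varepsilon,1)$ if $\varepsilon\in\{1,2\}$ and $(|D_1|,|D_{-1}|)=(1,1-\varepsilon)$ if $\varepsilon\in\{-1,-2\}$; or (ii) $\varepsilon\in\{\pm2\}$ and $\lambda_{x,y}=\lambda$ for all pairs except exactly one pair, for which $\lambda_{x,y}=\lambda+\varepsilon$.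
   Context: A triple system TS$(v;b)$ is a pair $(V,\mathcal F)$ where $V$ is a set of $v\ge 3$ points and $\mathcal F$ is a multiset of $b$ 3-subsets of $V$ (blocks); repeated blocks allowed. $\lambda_{x,y}$ is the number of blocks (with multiplicity) containing $\{x,y\}$. The associated pair $(\lambda,\varepsilon)$ of $(v,b)$: integers with $3b=\lambda\binom v2+\varepsilon$, $-v/2<\varepsilon<v/2$. (C1): $v\equiv 2\pmod 3$ and $b\in\{\lfloor \lambda v(v-1)/6\rfloor,\lceil \lambda v(v-1)/6\rceil\}$ for an integer $\lambda$ with $\lambda\equiv1,2\pmod 3$ if $v\equiv5\pmod6$ and $\lambda\equiv 2,4\pmod 6$ if $v\equiv2\pmod 6$; this $\lambda$ is the $\lambda$ of the associated pair. *)

From mathcomp Require Import all_boot all_order all_algebra.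
Set Implicit Arguments. Unset Strict Implicit. Unset Printing Implicit Defensive.
Import Order.TTheory GRing.Theory Num.Theory.
Local Open Scope ring_scope.

(* A triple system TS(v;b) on the point set 'I_v: a multiset (sequence) of
   b blocks, each a 3-subset of 'I_v; repeated blocks allowed. *)
Definition is_TS (v b : nat) (F : seq {set 'I_v}) : Prop :=
  size F = b /\ all (fun B : {set 'I_v} => #|B| == 3)%N F.

Definition pair_lambda (v : nat) (F : seq {set 'I_v}) (P : {set 'I_v}) : nat :=
  count (fun B : {set 'I_v} => P \subset B) F.

Definition sum_sq_lambda (v : nat) (F : seq {set 'I_v}) : int :=
  \sum_(P : {set 'I_v} | #|P| == 2%N) ((pair_lambda F P)%:Z ^+ 2).

Definition floor6 (x : int) : int := (x %/ 6)%Z.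
Definition ceil6 (x : int) : int := - ((- x) %/ 6)%Z.

Definition assoc_pair (v b : nat) (lam eps : int) : Prop :=
  (3 * b)%:Z = lam * ('C(v, 2))%:Z + eps /\
  - (v%:Z) < 2 * eps /\ 2 * eps < v%:Z.

Definition C1 (v b : nat) (lam : int) : Prop :=
  (v %% 3 = 2)%N /\
  (b%:Z = floor6 (lam * (v * (v - 1))%:Z) \/ b%:Z = ceil6 (lam * (v * (v - 1))%:Z)) /\
  ((v %% 6 = 5)%N -> ((lam %% 3)%Z = 1 \/ (lam %% 3)%Z = 2)) /\
  ((v %% 6 = 2)%N -> ((lam %% 6)%Z = 2 \/ (lam %% 6)%Z = 4)).

Definition D_card (v : nat) (F : seq {set 'I_v}) (t : int) : nat :=
  #|[set P : {set 'I_v} | (#|P| == 2%N) && ((pair_lambda F P)%:Z == t)]|.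

Definition cond_i (v : nat) (F : seq {set 'I_v}) (lam eps : int) : Prop :=
  (forall P : {set 'I_v}, #|P| = 2%N ->
     let l := (pair_lambda F P)%:Z in l = lam - 1 \/ l = lam \/ l = lam + 1) /\
  ((eps = 1 \/ eps = 2) ->
     (D_card F (lam + 1))%:Z = 1 + eps /\ D_card F (lam - 1) = 1%N) /\
  ((eps = -1 \/ eps = -2) ->
     D_card F (lam + 1) = 1%N /\ (D_card F (lam - 1))%:Z = 1 - eps).

Definition cond_ii (v : nat) (F : seq {set 'I_v}) (lam eps : int) : Prop :=
  (eps = 2 \/ eps = -2) /\
  exists P0 : {set 'I_v}, #|P0| = 2%N /\ (pair_lambda F P0)%:Z = lam + eps /\
    forall P : {set 'I_v}, #|P| = 2%N -> P != P0 -> (pair_lambda F P)%:Z = lam.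

From mathcomp Require Import all_boot all_order all_algebra zify ring.
Import Order.TTheory GRing.Theory Num.Theory.

Set Implicit Arguments.
Unset Strict Implicit.
Unset Printing Implicit Defensive.

(* Write m_P = lambda_P - lambda for the deviation of a pair P.  Counting
   blocks gives sum_P lambda_P = 3b, hence sum_P m_P = eps, and expanding the
   square gives sum_P lambda_P^2 = C(v,2) lambda^2 + 2 eps lambda + sum_P m_P^2.
   So everything reduces to 2 + |eps| <= sum_P m_P^2.  With s = sign eps we
   have sum_P m_P^2 - |eps| = sum_P m_P (m_P - s), a sum of non-negative
   integers, and a term is >= 2 as soon as m_P is neither 0 nor s.  The case
   where every m_P lies in {0, s} is impossible: the pairs with m_P = s then
   form a graph with |eps| in {1,2} edges, which has a vertex x of degree 1,
   so sum_(P containing x) m_P = s is odd; but this sum is 2 r_x - (v-1) lambda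
   (r_x the number of blocks through x), which is even by (C1). *)

Section PairsOfAFiniteSet.
Variable T : finType.

Lemma sum_pairs_in (B : {set T}) :
  (\sum_(P : {set T} | #|P| == 2) (P \subset B : nat) = 'C(#|B|, 2))%N.
Proof.
rewrite -big_mkcondr sum1_card -cards_draws.
by apply: eq_card => P; rewrite !inE andbC.
Qed.

(* A point x of S lies in exactly |S| - 1 of the 2-subsets of S: those are
   the 2-subsets of S minus the 2-subsets of S \ {x}. *)
Lemma card_pairs_through (S : {set T}) x : x \in S ->
  #|[set P : {set T} | P \subset S & (#|P| == 2) && (x \in P)]| = #|S|.-1.
Proof.
move=> xS.
have split_x := cardsID [set P : {set T} | x \in P]
                        [set P : {set T} | P \subset S & #|P| == 2].
have through_x :
    [set P : {set T} | P \subset S & #|P| == 2] :&: [set P : {set T} | x \in P]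
  = [set P : {set T} | P \subset S & (#|P| == 2) && (x \in P)].
  by apply/setP => P; rewrite !inE andbA.
have avoid_x :
    [set P : {set T} | P \subset S & #|P| == 2] :\: [set P : {set T} | x \in P]
  = [set P : {set T} | P \subset S :\ x & #|P| == 2].
  apply/setP => P; rewrite !inE subsetD1.
  by case: (x \in P); rewrite ?andbF ?andbT //= andbC.
rewrite through_x avoid_x !cards_draws in split_x.
have card_S := cardsD1 x S; rewrite xS add1n in card_S.
rewrite card_S binS bin1 /= in split_x *; lia.
Qed.

Lemma sum_pairs_through_in (B : {set T}) x :
  (\sum_(P : {set T} | (#|P| == 2) && (x \in P)) (P \subset B : nat) =
   if x \in B then #|B|.-1 else 0)%N.
Proof.
rewrite -big_mkcondr sum1_card; case: ifP => xB.
  rewrite -(card_pairs_through xB); apply: eq_card => P.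
  by rewrite !inE -topredE /= andbC.
apply: eq_card0 => P; rewrite !inE -topredE /=.
by apply/negP => /andP[/andP[_ xP] /subsetP/(_ x xP)]; rewrite xB.
Qed.

Lemma leaf_of_small_graph (E : {set {set T}}) :
  {in E, forall P : {set T}, #|P| = 2} -> (0 < #|E| <= 2)%N ->
  exists x, #|[set P in E | x \in P]| = 1.
Proof.
move=> E2 /andP[/card_gt0P [P0 P0E] E_le2].
have [z zP0 z_only] : exists2 z, z \in P0 & {in E :\ P0, forall P : {set T}, z \notin P}.
  have : (#|E :\ P0| <= 1)%N by move: E_le2; rewrite (cardsD1 P0 E) P0E.
  rewrite leq_eqVlt ltnS leqn0 => /orP[/cards1P [P1 EP1] | /eqP/cards0_eq E0].
    have P1E : P1 \in E :\ P0 by rewrite EP1 set11.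
    have /subsetPn [z zP0 zP1] : ~~ (P0 \subset P1).
      move: P1E; rewrite !inE => /andP[P10 /E2 P1_2].
      apply: contra P10 => sub01; rewrite eq_sym eqEcard sub01 P1_2.
      by rewrite (E2 _ P0E).
    by exists z => // P; rewrite EP1 inE => /eqP ->.
  have /card_gt0P [z zP0] : (0 < #|P0|)%N by rewrite (E2 _ P0E).
  by exists z => // P; rewrite E0 inE.
exists z; apply/eqP/cards1P; exists P0; apply/setP => P; rewrite !inE.
case: (eqVneq P P0) => [->|nP]; first by rewrite P0E zP0.
by case PE : (P \in E); rewrite //= (negbTE (z_only P _)) // !inE nP PE.
Qed.

End PairsOfAFiniteSet.

Section TripleSystemCounting.
Variables (v : nat) (F : seq {set 'I_v}).
Hypothesis F_triples : all (fun B : {set 'I_v} => #|B| == 3) F.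

(* Each block covers three pairs, so the pair multiplicities add up to 3|F|. *)
Lemma sum_pair_lambda :
  (\sum_(P : {set 'I_v} | #|P| == 2) pair_lambda F P = 3 * size F)%N.
Proof.
elim: F F_triples => [|B F' IH] /=; first by rewrite big1.
case/andP => /eqP B3 /IH {}IH.
by rewrite /pair_lambda /= big_split /= -/(pair_lambda _ _) IH sum_pairs_in B3 mulnS.
Qed.

(* Each block through x covers two pairs through x, so the multiplicities of
   the pairs through x add up to twice the number of blocks through x. *)
Lemma sum_pair_lambda_through x :
  (\sum_(P : {set 'I_v} | (#|P| == 2) && (x \in P)) pair_lambda F P
     = 2 * count (fun B : {set 'I_v} => x \in B) F)%N.
Proof.
elim: F F_triples => [|B F' IH] /=; first by rewrite big1.
case/andP => /eqP B3 /IH {}IH.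
rewrite /pair_lambda /= big_split /= -/(pair_lambda _ _) IH.
by rewrite sum_pairs_through_in B3; case: (x \in B); rewrite /= ?mulnDr.
Qed.

End TripleSystemCounting.

Local Open Scope ring_scope.

Section ConditionC1.
Variables (v b : nat) (lam : int).
Hypothesis hC1 : C1 v b lam.

(* (C1) forces v = 5 or 2 (mod 6), hence lambda is prime to 3. *)
Lemma C1_lam_mod3 : (lam %% 3)%Z = 1 \/ (lam %% 3)%Z = 2.
Proof.
have [v_mod3 [_ [lam5 lam2]]] := hC1.
have : (v %% 6 = 5 \/ v %% 6 = 2)%N by lia.
by case=> /[dup] v6; [move/lam5 | move/lam2; lia].
Qed.

(* When 3b = lambda C(v,2) + eps, (C1) says b is the floor or ceiling of
   lambda C(v,2)/3, where C(v,2) = 1 (mod 3) and lambda is prime to 3. *)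
Lemma C1_eps (eps : int) : (3 * b)%:Z = lam * ('C(v, 2))%:Z + eps ->
  eps = 1 \/ eps = 2 \/ eps = -1 \/ eps = -2.
Proof.
have [v_mod3 [b_round _]] := hC1; move=> def_eps.
have pairs2 : (v * (v - 1) = 2 * 'C(v, 2))%N by rewrite -mul_bin_diag bin1 subn1.
have [n pairs_mod3] : exists n, 'C(v, 2) = (3 * n + 1)%N.
  exists ('C(v, 2) %/ 3)%N.
  have [a va] : exists a, v = (3 * a + 2)%N by exists (v %/ 3)%N; lia.
  have : (2 * 'C(v, 2) = 9 * (a * a + a) + 2)%N by rewrite -pairs2 va; nia.
  lia.
have lamC : lam * ('C(v, 2))%:Z = 3 * (lam * n%:Z) + lam.
  by rewrite pairs_mod3 PoszD PoszM; ring.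
have lamN : lam * (v * (v - 1))%:Z = 2 * (lam * ('C(v, 2))%:Z).
  by rewrite pairs2 PoszM; ring.
rewrite /floor6 /ceil6 lamN in b_round.
have := C1_lam_mod3; rewrite lamC in def_eps; lia.
Qed.

(* (C1) makes (v - 1) lambda even: v - 1 is even when v = 5 (mod 6), and
   lambda is even when v = 2 (mod 6). *)
Lemma C1_even : exists k : int, (v.-1)%:Z * lam = 2 * k.
Proof.
have [v_mod3 [_ [_ lam2]]] := hC1.
have : (v %% 6 = 5 \/ v %% 6 = 2)%N by lia.
case=> v6.
  exists ((v.-1 %/ 2)%N%:Z * lam).
  have v1_even : (v.-1 = 2 * (v.-1 %/ 2))%N by lia.
  by rewrite {1}v1_even PoszM mulrA.
exists ((v.-1)%:Z * (lam %/ 2)%Z).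
have lam_even : lam = 2 * (lam %/ 2)%Z by move: (lam2 v6); lia.
by rewrite {1}lam_even mulrCA.
Qed.

End ConditionC1.

Lemma natz_sum (I : Type) (r : seq I) (p : pred I) (f : I -> nat) :
  (\sum_(i <- r | p i) f i)%N%:Z = \sum_(i <- r | p i) (f i)%:Z.
Proof. exact: (big_morph Posz PoszD). Qed.

Section IntegerSums.
Variable T : finType.

Lemma sum_const_pairs (c : int) :
  \sum_(P : {set T} | #|P| == 2%N) c = ('C(#|T|, 2))%:Z * c.
Proof.
rewrite (eq_bigl (fun P => P \in [set P : {set T} | #|P| == 2%N])); last first.
  by move=> P; rewrite inE.
by rewrite sumr_const card_draws -mulr_natl natz.
Qed.

Lemma sum_indicator (p q : pred T) :
  \sum_(i | p i) (if q i then 1 else 0 : int) = (#|[set i | p i && q i]|)%:Z.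
Proof.
rewrite -big_mkcondr (eq_bigl (fun i => i \in [set i | p i && q i])); last first.
  by move=> i; rewrite inE.
by rewrite sumr_const -mulr_natl natz mulr1.
Qed.

Lemma sum_two_valued (p : pred T) (m : T -> int) (s : int) :
  (forall i, p i -> m i = 0 \/ m i = s) ->
  \sum_(i | p i) m i = s * (#|[set i | p i && (m i == s)]|)%:Z.
Proof.
move=> m_vals; rewrite -sum_indicator mulr_sumr; apply: eq_bigr => i pi.
by case: eqP => [->|m_ne_s]; [rewrite mulr1 | case: (m_vals i pi) => // ->; rewrite mulr0].
Qed.

Lemma sum_sq_shift (p : pred T) (f : T -> int) (lam : int) :
  \sum_(i | p i) f i ^+ 2 =
  \sum_(i | p i) lam ^+ 2 + 2 * lam * \sum_(i | p i) (f i - lam)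
   + \sum_(i | p i) (f i - lam) ^+ 2.
Proof. by rewrite mulr_sumr -!big_split /=; apply: eq_bigr => i _; ring. Qed.

Lemma sign_excess_ge0 (s m : int) : s = 1 \/ s = -1 -> 0 <= m ^+ 2 - s * m.
Proof. by rewrite expr2; case=> ->; nia. Qed.

Lemma sign_excess_ge2 (s m : int) : s = 1 \/ s = -1 -> m != 0 -> m != s ->
  2 <= m ^+ 2 - s * m.
Proof. by rewrite expr2; case=> -> /eqP m0 /eqP ms; nia. Qed.

(* If s is the sign of sum_i m_i, then sum_i m_i^2 - |sum_i m_i| is the sum of
   the excesses m_i (m_i - s); one term outside {0, s} already gives 2. *)
Lemma sum_sq_ge_two_plus_abs (p : pred T) (m : T -> int) (s : int) :
  s = 1 \/ s = -1 -> s * \sum_(i | p i) m i = `|\sum_(i | p i) m i| ->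
  (exists i, [&& p i, m i != 0 & m i != s]) ->
  2 + `|\sum_(i | p i) m i| <= \sum_(i | p i) m i ^+ 2.
Proof.
move=> s_sign s_abs [i0 /and3P[pi0 mi0 mi0s]].
have excess : \sum_(i | p i) m i ^+ 2 - `|\sum_(i | p i) m i|
            = \sum_(i | p i) (m i ^+ 2 - s * m i).
  by rewrite sumrB -mulr_sumr s_abs.
have rest_ge0 : 0 <= \sum_(i | p i && (i != i0)) (m i ^+ 2 - s * m i).
  by apply: sumr_ge0 => i _; exact: sign_excess_ge0.
have := lerD (sign_excess_ge2 s_sign mi0 mi0s) rest_ge0.
by rewrite -(bigD1 i0) //= -excess addr0 lerBrDr addrC.
Qed.

End IntegerSums.

Definition deviation (v : nat) (F : seq {set 'I_v}) (lam : int)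
    (P : {set 'I_v}) : int :=
  (pair_lambda F P)%:Z - lam.

Section Deviations.
Variables (v b : nat) (lam eps : int) (F : seq {set 'I_v}).
Hypothesis F_TS : is_TS b F.
Hypothesis def_eps : (3 * b)%:Z = lam * ('C(v, 2))%:Z + eps.

Lemma sum_deviation :
  \sum_(P : {set 'I_v} | #|P| == 2%N) deviation F lam P = eps.
Proof.
have [size_F F_triples] := F_TS.
rewrite sumrB sum_const_pairs card_ord -natz_sum sum_pair_lambda // size_F.
by rewrite def_eps; ring.
Qed.

Lemma sum_sq_lambda_deviation :
  sum_sq_lambda F = ('C(v, 2))%:Z * lam ^+ 2 + 2 * eps * lam +
    \sum_(P : {set 'I_v} | #|P| == 2%N) deviation F lam P ^+ 2.
Proof.
rewrite /sum_sq_lambda (sum_sq_shift _ _ lam) sum_const_pairs card_ord.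
by rewrite sum_deviation; ring.
Qed.

Lemma sum_deviation_through x :
  \sum_(P : {set 'I_v} | (#|P| == 2%N) && (x \in P)) deviation F lam P =
  2 * (count (fun B : {set 'I_v} => x \in B) F)%:Z - (v.-1)%:Z * lam.
Proof.
have [_ F_triples] := F_TS.
rewrite sumrB -natz_sum sum_pair_lambda_through // PoszM.
rewrite (eq_bigl (fun P => P \in [set P : {set 'I_v} | P \subset setT &
                                    (#|P| == 2%N) && (x \in P)])); last first.
  by move=> P; rewrite inE subsetT.
rewrite sumr_const card_pairs_through ?inE // cardsT card_ord.
by rewrite -[lam *+ _]mulr_natl natz; ring.
Qed.

End Deviations.

Section LowerBound.
Variables (v b : nat) (lam eps : int) (F : seq {set 'I_v}).
Hypothesis hC1 : C1 v b lam.
Hypothesis F_TS : is_TS b F.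
Hypothesis def_eps : (3 * b)%:Z = lam * ('C(v, 2))%:Z + eps.

(* Under (C1) the deviations cannot all lie in {0, s} for the sign s of eps:
   otherwise the pairs of deviation s would form a graph with |eps| <= 2
   edges, whose leaf x would make the even sum of the deviations through x
   equal to s. *)
Lemma deviation_off_sign (s : int) : s = 1 \/ s = -1 -> s * eps = `|eps| ->
  exists P : {set 'I_v},
    [&& #|P| == 2%N, deviation F lam P != 0 & deviation F lam P != s].
Proof.
move=> s_sign s_abs.
case: (boolP [exists P : {set 'I_v}, [&& #|P| == 2%N, deviation F lam P != 0 &
                            deviation F lam P != s]]) => [/existsP //|/existsPn small].
have dev_vals (P : {set 'I_v}) :
    #|P| == 2%N -> deviation F lam P = 0 \/ deviation F lam P = s.
  move: (small P) => /[swap] -> /=.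
  by case: eqVneq => [|_] /=; [left | rewrite negbK => /eqP; right].
pose E := [set P : {set 'I_v} | (#|P| == 2%N) && (deviation F lam P == s)].
have eps_E : eps = s * (#|E|)%:Z.
  by rewrite -(sum_deviation F_TS def_eps); exact: sum_two_valued.
have E_pairs : {in E, forall P : {set 'I_v}, #|P| = 2%N}.
  by move=> P; rewrite inE => /andP[/eqP].
have card_E : (0 < #|E| <= 2)%N.
  by have := C1_eps hC1 def_eps; case: s_sign => s_val; rewrite eps_E s_val; lia.
have [x deg_x] := leaf_of_small_graph E_pairs card_E.
have sum_through_x :
    \sum_(P : {set 'I_v} | (#|P| == 2%N) && (x \in P)) deviation F lam P = s.
  rewrite (sum_two_valued (s := s)
             (p := fun P : {set 'I_v} => (#|P| == 2%N) && (x \in P))); last first.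
    by move=> P /andP[P2 _]; exact: dev_vals.
  suff -> : [set P : {set 'I_v} | ((#|P| == 2%N) && (x \in P))
                                   && (deviation F lam P == s)]
            = [set P in E | x \in P] by rewrite deg_x mulr1.
  by apply/setP => P; rewrite !inE -andbA [(x \in P) && _]andbC andbA.
have [k even_k] := C1_even hC1.
have := sum_deviation_through lam F_TS x.
by rewrite sum_through_x even_k; case: s_sign => ->; lia.
Qed.

Lemma sum_sq_deviation_lower :
  2 + `|eps| <= \sum_(P : {set 'I_v} | #|P| == 2%N) deviation F lam P ^+ 2.
Proof.
have [s s_sign s_abs] : exists2 s : int, s = 1 \/ s = -1 & s * eps = `|eps|.
  by case: (C1_eps hC1 def_eps) => [->|[->|[->|->]]];
    [exists 1 | exists 1 | exists (-1) | exists (-1)]; lia.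
rewrite -{1}(sum_deviation F_TS def_eps).
apply: (sum_sq_ge_two_plus_abs s_sign).
  by rewrite (sum_deviation F_TS def_eps).
exact: deviation_off_sign.
Qed.

End LowerBound.

Section EqualityCases.
Variables (v : nat) (lam eps : int) (F : seq {set 'I_v}).

(* Under condition (i) each squared deviation is 0 or 1, the pairs of
   deviation +1 and -1 being counted by D_1 and D_{-1}. *)
Lemma sum_sq_deviation_cond_i :
  eps = 1 \/ eps = 2 \/ eps = -1 \/ eps = -2 -> cond_i F lam eps ->
  \sum_(P : {set 'I_v} | #|P| == 2%N) deviation F lam P ^+ 2 = 2 + `|eps|.
Proof.
move=> eps_vals [near_lam [card_pos card_neg]].
have sq_dev (P : {set 'I_v}) : #|P| == 2%N -> deviation F lam P ^+ 2 =
    (if (pair_lambda F P)%:Z == lam + 1 then 1 else 0) +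
    (if (pair_lambda F P)%:Z == lam - 1 then 1 else 0).
  move=> /eqP P2; rewrite /deviation expr2.
  by case: (near_lam P P2) => [->|[->|->]]; do 2 case: eqP; nia.
rewrite (eq_bigr _ sq_dev) big_split /= !sum_indicator -!/(D_card F _).
case: eps_vals => [|[|[|]]] eps_val; rewrite eps_val.
- by case: (card_pos (or_introl eps_val)) => -> ->; rewrite eps_val.
- by case: (card_pos (or_intror eps_val)) => -> ->; rewrite eps_val.
- by case: (card_neg (or_introl eps_val)) => -> ->; rewrite eps_val.
- by case: (card_neg (or_intror eps_val)) => -> ->; rewrite eps_val.
Qed.

(* Under condition (ii) the only nonzero deviation is eps = +-2 itself. *)
Lemma sum_sq_deviation_cond_ii : cond_ii F lam eps ->
  \sum_(P : {set 'I_v} | #|P| == 2%N) deviation F lam P ^+ 2 = 2 + `|eps|.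
Proof.
case=> eps2 [P0 [P0_2 [lam_P0 lam_rest]]].
rewrite (bigD1 P0) ?P0_2 //= big1 => [|P /andP[/eqP P2 nP]]; last first.
  by rewrite /deviation lam_rest // subrr expr0n.
by rewrite /deviation lam_P0 addr0 addrAC subrr add0r; case: eps2 => ->.
Qed.

End EqualityCases.

Theorem lemma2p1 (v b : nat) (lam eps : int) :
  (3 <= v)%N -> C1 v b lam -> assoc_pair v b lam eps ->
  (forall F : seq {set 'I_v}, is_TS b F ->
     ('C(v, 2))%:Z * lam ^+ 2 + 2 * eps * lam + 2 + `|eps| <= sum_sq_lambda F) /\
  (forall F : seq {set 'I_v}, is_TS b F ->
     cond_i F lam eps \/ cond_ii F lam eps ->
     sum_sq_lambda F = ('C(v, 2))%:Z * lam ^+ 2 + 2 * eps * lam + 2 + `|eps|).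
Proof.
move=> _ hC1 [def_eps _]; split=> F F_TS.
  rewrite (sum_sq_lambda_deviation F_TS def_eps) -addrA lerD2l.
  exact: sum_sq_deviation_lower hC1 F_TS def_eps.
rewrite (sum_sq_lambda_deviation F_TS def_eps) -[in RHS]addrA => -[cond | cond].
  by rewrite (sum_sq_deviation_cond_i (C1_eps hC1 def_eps) cond).
by rewrite (sum_sq_deviation_cond_ii cond).
Qed.
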